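(* Let $\widehat{\mathbf M}\otimes\mathcal A_\psi$ be the product of a gMDP $\widehat{\mathbf M}$ (state space $\hat{\mathbb X}$, input space $\hat{\mathbb U}$) with the DFA $\mathcal A_\psi=(Q,q_0,\Sigma,F,\tau)$, and let $\delta>0$. Let $V^*_\infty:=\lim_{l\to\infty}(\mathbf T^*_\delta)^l(V_0)$ with $V_0=0$. Let $\mu^*:\hat{\mathbb X}\times Q\to\mathcal P(\hat{\mathbb U})$ be a universally measurable map with $\mu^*\in\arg\sup_\mu\mathbf T^\mu_\delta(V^*_\infty)$, i.e. $\mathbf T^{\mu^*}_\delta(V^*_\infty)=\mathbf T^*_\delta(V^*_\infty)$. Then the stationary Markov policy $(\mu^*,\mu^*,\dots)$ is an optimal $(0,\delta)$-robust policy in the sense that $$V^*_\infty=\lim_{l\to\infty}(\mathbf T^{\mu^*}_\delta)^l(V_0),\qquad V_0=0.$$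
   Context: A gMDP is a tuple $\widehat{\mathbf M}=(\hat{\mathbb X},\hat{\mathbb U},\mathbb Y,\hat x_0,\hat{\mathbf t},\hat h)$ with Polish state space $\hat{\mathbb X}$, Polish input space $\hat{\mathbb U}$, metric output space $(\mathbb Y,\mathbf d_{\mathbb Y})$, initial state $\hat x_0$, stochastic kernel $\hat{\mathbf t}(\cdot\mid\hat x,\hat u)$ on $\hat{\mathbb X}$, and measurable output map $\hat h$. $\mathsf{AP}$ is a finite set of atomic propositions, $\Sigma=2^{\mathsf{AP}}$, $\mathsf L:\mathbb Y\to\Sigma$ a measurable labelling function; $\psi$ is an scLTL formula and $\mathcal A_\psi=(Q,q_0,\Sigma,F,\tau)$ a deterministic finite automaton (finite $Q$, accepting set $F$, transition $\tau:Q\times\Sigma\to Q$) accepting exactly the words satisfying $\psi$. The product $\widehat{\mathbf M}\otimes\mathcal A_\psi$ has states $\hat{\mathbb X}\times Q$, inputs $\hat{\mathbb U}$, and kernel $\bar{\mathbf t}(d\hat x'\times\{q'\}\mid\hat x,q,u)=\mathbf 1_{\{q'\}}(\tau(q,\mathsf L(\hat h(\hat x'))))\,\hat{\mathbf t}(d\hat x'\mid\hat x,u)$. For a universally measurable $\mu:\hat{\mathbb X}\times Q\to\mathcal P(\hat{\mathbb U})$ and $V:\hat{\mathbb X}\times Q\to[0,1]$: $\mathbf T^\mu(V)(\hat x,q)=\int\max\{\mathbf 1_F(q'),V(\hat x',q')\}\,\bar{\mathbf t}(d\hat x'\times\{q'\}\mid\hat x,q,\mu(\hat x,q))$; $\mathbf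 T^\mu_\delta(V)=\mathbf L(\mathbf T^\mu(V)-\delta)$ with $\mathbf L(r)=\min(1,\max(0,r))$; and $\mathbf T^*_\delta(V)=\sup_\mu\mathbf T^\mu_\delta(V)$ (pointwise). *)

From HB Require Import structures.
From mathcomp Require Import all_boot all_order all_algebra.
From mathcomp Require Import all_classical all_reals all_analysis measurable_realfun.
Set Implicit Arguments. Unset Strict Implicit. Unset Printing Implicit Defensive.
Import Order.TTheory GRing.Theory Num.Theory.
Local Open Scope classical_set_scope.
Local Open Scope ring_scope.

Definition dist_open {T : Type} {R : realType} (dist : T -> T -> R) (A : set T) :=
  forall x, A x -> exists2 e : R, 0 < e & [set y | dist x y < e] `<=` A.

Definition metric_borel {d} (T : measurableType d) (R : realType)
    (dist : T -> T -> R) : Prop :=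
  [/\ (forall x y, dist x y = 0 <-> x = y),
      (forall x y, dist x y = dist y x),
      (forall x y z, dist x z <= dist x y + dist y z) &
      @measurable d T = <<s dist_open dist >>].

Definition metric_measurable {d} (T : measurableType d) (R : realType) : Prop :=
  exists dist : T -> T -> R, metric_borel dist.

Definition polish_measurable {d} (T : measurableType d) (R : realType) : Prop :=
  exists dist : T -> T -> R,
    [/\ metric_borel dist,
        (forall u : nat -> T,
            (forall e : R, 0 < e -> exists N, forall m n, (N <= m)%N -> (N <= n)%N ->
                 dist (u m) (u n) < e) ->
            exists l, forall e : R, 0 < e -> exists N, forall n, (N <= n)%N ->
                 dist (u n) l < e) &
        (exists D : set T, countable D /\
            forall x (e : R), 0 < e -> exists2 y, D y & dist x y < e)].

(* A is measurable for the completion of every probability measure on T *)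
Definition univ_measurable_set {d} {T : measurableType d} (R : realType)
    (A : set T) : Prop :=
  forall P : probability T R,
    exists2 B, measurable B & P.-negligible ((A `\` B) `|` (B `\` A)).

Definition univ_measurable_fun {d} {T : measurableType d} (R : realType)
    (f : T -> \bar R) : Prop :=
  forall B : set (\bar R), measurable B -> univ_measurable_set R (f @^-1` B).

(* A (randomized, stationary) policy mu : X x Q -> P(U) is universally
   measurable when, for every q, and every measurable B of U,
   x |-> mu(x,q)(B) is universally measurable (P(U) carries the
   sigma-algebra generated by the evaluation maps). *)
Definition univ_measurable_policy {dX dU} (X : measurableType dX)
    (U : measurableType dU) (Q : Type) (R : realType)
    (mu : X -> Q -> probability U R) : Prop :=
  forall (q : Q) (B : set U), measurable B ->
    univ_measurable_fun (fun x : X => mu x q B).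

Definition clip01 {R : realType} (r : R) : R := Num.min 1 (Num.max 0 r).

Section operators.
Context {dX dU : measure_display} (X : measurableType dX) (U : measurableType dU)
  (R : realType) (AP Q : finType)
  (t : R.-pker (X * U)%type ~> X)
  (lab : X -> {set AP})                (* the map  L o h  *)
  (F : {set Q}) (tau : Q -> {set AP} -> Q).

(* T^mu(V)(x,q) = int max{1_F(q'), V(x',q')} tbar(dx' x {q'} | x, q, mu(x,q)),
   the kernel tbar under the randomized input mu(x,q) being the mixture
   int_U tbar(. | x, q, u) mu(x,q)(du). *)
Definition Tmu (mu : X -> Q -> probability U R) (V : X -> Q -> R) : X -> Q -> R :=
  fun x q => fine (\int[mu x q]_u
     \int[t (x, u)]_x' (Num.max ((tau q (lab x') \in F)%:R)
                               (V x' (tau q (lab x'))))%:E)%E.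

Definition Tmu_delta (delta : R) (mu : X -> Q -> probability U R)
    (V : X -> Q -> R) : X -> Q -> R :=
  fun x q => clip01 (Tmu mu V x q - delta).

Definition Tstar_delta (delta : R) (V : X -> Q -> R) : X -> Q -> R :=
  fun x q => sup [set Tmu_delta delta mu V x q |
                   mu in [set mu | univ_measurable_policy mu]].

End operators.

From HB Require Import structures.
From mathcomp Require Import all_boot all_order all_algebra.
From mathcomp Require Import all_classical all_reals all_analysis measurable_realfun.
From mathcomp Require Import lra.
Import Order.TTheory GRing.Theory Num.Theory numFieldNormedType.Exports.
Local Open Scope classical_set_scope.
Local Open Scope ring_scope.
Import HBNNSimple.
Set Implicit Arguments.
Unset Strict Implicit.

(* For k > 0, the potential V + k (V - W) is bounded by a constant c >= 1
   after applying T^mu whenever it was before, since T^mu averages with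
   respect to a probability.  If V <= T^mu_delta V, the clipping in
   T^mu_delta is inactive on V's side wherever V exceeds W, so one step of
   T^mu_delta lowers that bound by delta.  Starting from W_0 = 0 this gives
   V + k (V - W_l) <= max (1 + k - l delta) 1, and k = l delta yields
   V - W_l <= 1 / (l delta).  The limit V*_oo of value iteration satisfies
   V*_oo <= T*_delta V*_oo = T^mu*_delta V*_oo by monotonicity of T*_delta,
   while the iterates of T^mu*_delta stay below those of T*_delta, hence
   below V*_oo. *)

(* Integrals of nonnegative functions not known to be measurable (such as
   the integrands of Tmu for an arbitrary V) are suprema over simple
   minorants, so the comparisons below need no measurability. *)
Section lower_integral.
Context {d : measure_display} {T : measurableType d} {R : realType}
  {mu : {measure set T -> \bar R}}.
Local Open Scope ereal_scope.

Lemma ge0_le_integral_lower (f g : T -> \bar R) :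
  (forall x, 0 <= f x) -> (forall x, 0 <= g x) -> (forall x, f x <= g x) ->
  \int[mu]_x f x <= \int[mu]_x g x.
Proof.
move=> f0 g0 fg; rewrite !ge0_integralTE//.
apply: ereal_sup_le => _ [h /= hf <-]; exists h => //= x.
exact: le_trans (hf x) (fg x).
Qed.

Hypothesis mu_le1 : mu setT <= 1.

Lemma ge0_integral_le_affine (f g : T -> \bar R) (c k : R) :
  (0 <= c)%R -> (0 < k)%R -> (forall x, 0 <= f x) -> (forall x, 0 <= g x) ->
  (forall x, f x <= c%:E + k%:E * g x) ->
  \int[mu]_x f x <= c%:E + k%:E * \int[mu]_x g x.
Proof.
move=> c0 k0 f0 g0 fg; rewrite [leLHS]ge0_integralTE//.
apply: ge_ereal_sup => _ [h /= hf <-]; rewrite -integralT_nnsfun.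
pose h' x : \bar R := (Num.max (h x - c) 0 / k)%R%:E.
have mh' : measurable_fun setT h'.
  apply/measurable_EFinP/measurable_funM => //.
  by apply: measurable_maxr => //; exact: measurable_funB.
have h'0 x : 0 <= h' x by rewrite lee_fin divr_ge0 ?le_max ?lexx ?orbT// ltW.
have hh' x : (h x)%:E <= c%:E + k%:E * h' x.
  by rewrite -EFinM -EFinD lee_fin mulrC divfK ?gt_eqF// -lerBlDl le_max lexx.
have h'g x : h' x <= g x.
  rewrite /h'; case: (leP (h x - c)%R 0%R) => hc; first by rewrite mul0r g0.
  have := le_trans (hf x) (fg x).
  case: (g x) (g0 x) => [r _ /=|_ _|//]; last by rewrite leey.
  by rewrite -EFinM -EFinD !lee_fin ler_pdivrMr// mulrC lerBlDl.
apply: (@le_trans _ _ (\int[mu]_x (c%:E + k%:E * h' x)%E)).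
  apply: ge0_le_integral => //.
  - by move=> x _; rewrite lee_fin.
  - exact/measurable_EFinP.
  - exact/emeasurable_funD/emeasurable_funM.
rewrite ge0_integralD//=; last 2 first.
- by move=> x _; rewrite mule_ge0// lee_fin ltW.
- exact: emeasurable_funM.
rewrite integral_cst// ge0_integralZl_EFin//; last exact: ltW.
apply: leeD; first by rewrite -[leRHS]mule1 lee_wpmul2l// lee_fin.
by apply: lee_wpmul2l; [rewrite lee_fin ltW|exact: ge0_le_integral_lower].
Qed.

Lemma ge0_integral_le_cst (f : T -> \bar R) (c : R) :
  (0 <= c)%R -> (forall x, 0 <= f x) -> (forall x, f x <= c%:E) ->
  \int[mu]_x f x <= c%:E.
Proof.
move=> c0 f0 fc; have := @ge0_integral_le_affine f (fun=> 0) c 1 c0 ltr01 f0.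
by rewrite integral0 mule0 adde0; apply=> // x; rewrite mule0 adde0.
Qed.

End lower_integral.

Lemma clip01_ge0 (R : realType) (r : R) : 0 <= clip01 r.
Proof. by rewrite /clip01 le_min ler01 le_max lexx. Qed.

Lemma clip01_le1 (R : realType) (r : R) : clip01 r <= 1.
Proof. by rewrite /clip01 ge_min lexx. Qed.

Lemma le_clip01 (R : realType) (r s : R) : r <= s -> clip01 r <= clip01 s.
Proof. by move=> rs; rewrite /clip01 le_min2// le_max2. Qed.

Lemma clip01_ge (R : realType) (r : R) : r <= 1 -> r <= clip01 r.
Proof. by move=> r1; rewrite /clip01 le_min r1 le_max lexx orbT. Qed.

Lemma clip01_gt0_le (R : realType) (r : R) : 0 < clip01 r -> clip01 r <= r.
Proof.
move=> clip_gt0; case: (leP r 0) => r0.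
  have : clip01 r <= 0 by rewrite /clip01 ge_min ge_max lexx r0 orbT.
  by rewrite leNgt clip_gt0.
by rewrite /clip01 ge_min ge_max (ltW r0) lexx orbT.
Qed.

Lemma cvg_gap_le_inv (R : realType) (u : R^nat) (v c : R) : 0 < c ->
  (forall n, (0 < n)%N -> 0 <= v - u n <= (n%:R * c)^-1) -> u @ \oo --> v.
Proof.
move=> c0 gap; apply/cvgrPdist_le => e e0.
exists (Num.truncn ((e * c)^-1)).+1 => // n /= Nn.
have n0 : (0 < n)%N by apply: leq_trans Nn.
have /andP[gap0 gap1] := gap n n0.
rewrite ger0_norm// (le_trans gap1)// invf_ple ?posrE ?mulr_gt0 ?ltr0n//.
rewrite -ler_pdivrMr// -invfM; apply/ltW/(lt_le_trans (truncnS_gt _)).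
by rewrite ler_nat.
Qed.

Section operators.
Context {dX dU : measure_display} (X : measurableType dX) (U : measurableType dU)
  (R : realType) (AP Q : finType) (t : R.-pker (X * U)%type ~> X)
  (lab : X -> {set AP}) (F : {set Q}) (tau : Q -> {set AP} -> Q).

Definition unit_valued (V : X -> Q -> R) := forall x q, 0 <= V x q <= 1.

Definition Tmu_integrand (V : X -> Q -> R) (q : Q) (y : X) : R :=
  Num.max ((tau q (lab y) \in F)%:R) (V y (tau q (lab y))).

Lemma Tmu_integrand_01 V q y : unit_valued V -> 0 <= Tmu_integrand V q y <= 1.
Proof.
move=> V01; have /andP[V0 V1] := V01 y (tau q (lab y)).
by rewrite /Tmu_integrand le_max ge_max V0 V1 orbT lern1 leq_b1.
Qed.

Lemma iter_integral_le_affine (P : probability U R) x (a b : X -> R) (c k : R) :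
  0 <= c -> 0 < k -> (forall y, 0 <= a y) -> (forall y, 0 <= b y) ->
  (forall y, a y <= c + k * b y) ->
  (\int[P]_u \int[t (x, u)]_y (a y)%:E <=
     c%:E + k%:E * \int[P]_u \int[t (x, u)]_y (b y)%:E)%E.
Proof.
move=> c0 k0 a0 b0 ab.
have int_ge0 (f : X -> R) u :
    (forall y, 0 <= f y) -> (0 <= \int[t (x, u)]_y (f y)%:E)%E.
  by move=> f0; apply: integral_ge0 => y _; rewrite lee_fin.
have P_le1 : (P setT <= 1)%E by exact: probability_le1.
have t_le1 u : (t (x, u) setT <= 1)%E by rewrite prob_kernel.
apply: (ge0_integral_le_affine P_le1) => // [u|u|u]; try exact: int_ge0.
exact: (ge0_integral_le_affine (t_le1 u)).
Qed.

Lemma iter_integral_01 (P : probability U R) x (a : X -> R) :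
  (forall y, 0 <= a y <= 1) ->
  (0 <= \int[P]_u \int[t (x, u)]_y (a y)%:E <= 1)%E.
Proof.
move=> a01; have a0 y : 0 <= a y by case/andP: (a01 y).
have int_ge0 u : (0 <= \int[t (x, u)]_y (a y)%:E)%E.
  by apply: integral_ge0 => y _; rewrite lee_fin.
rewrite integral_ge0//=.
apply: (ge0_integral_le_cst (probability_le1 P measurableT)) => // u.
apply: ge0_integral_le_cst => [|//|//|y]; first by rewrite prob_kernel.
by rewrite lee_fin; case/andP: (a01 y).
Qed.

Lemma Tmu_EFin mu V x q : unit_valued V ->
  (Tmu t lab F tau mu V x q)%:E =
    (\int[mu x q]_u \int[t (x, u)]_y (Tmu_integrand V q y)%:E)%E.
Proof.
move=> V01; have /andP[I0 I1] := iter_integral_01 (mu x q) x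
  (fun y => Tmu_integrand_01 q y V01).
by rewrite fineK// ge0_fin_numE// (le_lt_trans I1) ?ltry.
Qed.

Lemma Tmu_01 mu V : unit_valued V -> unit_valued (Tmu t lab F tau mu V).
Proof.
move=> V01 x q; rewrite -2!lee_fin Tmu_EFin//.
exact: iter_integral_01 _ _ (fun y => Tmu_integrand_01 q y V01).
Qed.

Lemma Tmu_le_affine mu V W x q (c k : R) :
  unit_valued V -> unit_valued W -> 0 <= c -> 0 < k ->
  (forall y, Tmu_integrand V q y <= c + k * Tmu_integrand W q y) ->
  Tmu t lab F tau mu V x q <= c + k * Tmu t lab F tau mu W x q.
Proof.
move=> V01 W01 c0 k0 VW; rewrite -lee_fin EFinD EFinM !Tmu_EFin//.
apply: iter_integral_le_affine => // y.
- by case/andP: (Tmu_integrand_01 q y V01).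
- by case/andP: (Tmu_integrand_01 q y W01).
Qed.

Lemma le_Tmu mu V W x q : unit_valued V -> unit_valued W ->
  (forall x q, V x q <= W x q) ->
  Tmu t lab F tau mu V x q <= Tmu t lab F tau mu W x q.
Proof.
move=> V01 W01 VW; rewrite -[leRHS]mul1r -[leRHS]add0r.
apply: Tmu_le_affine => // y.
by rewrite add0r mul1r /Tmu_integrand le_max2.
Qed.

Lemma Tmu_gap_le mu V W x q (k c : R) :
  unit_valued V -> unit_valued W -> 0 < k -> 0 <= c ->
  (forall y, Tmu_integrand V q y +
             k * (Tmu_integrand V q y - Tmu_integrand W q y) <= c) ->
  Tmu t lab F tau mu V x q +
    k * (Tmu t lab F tau mu V x q - Tmu t lab F tau mu W x q) <= c.
Proof.
move=> V01 W01 k0 c0 VW; have k1 : 0 < 1 + k by rewrite addr_gt0.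
have gapE (a b : R) :
    (a + k * (a - b) <= c) = (a <= c / (1 + k) + k / (1 + k) * b).
  by rewrite mulrAC -mulrDl ler_pdivlMr//; apply/idP/idP => ?; nra.
rewrite gapE; apply: Tmu_le_affine => // [||y]; last by rewrite -gapE.
- by rewrite divr_ge0// ltW.
- by rewrite divr_gt0.
Qed.

Lemma iter_unit_valued (T : (X -> Q -> R) -> X -> Q -> R) l :
  (forall V, unit_valued V -> unit_valued (T V)) ->
  unit_valued (iter l T (fun _ _ => 0)).
Proof.
move=> T01; elim: l => [x q|l IH]; first by rewrite lexx ler01.
exact: T01.
Qed.

Variable delta : R.

Lemma Tmu_delta_01 mu V : unit_valued (Tmu_delta t lab F tau delta mu V).
Proof. by move=> x q; rewrite clip01_ge0 clip01_le1. Qed.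

Lemma le_Tmu_delta mu V W x q : unit_valued V -> unit_valued W ->
  (forall x q, V x q <= W x q) ->
  Tmu_delta t lab F tau delta mu V x q <= Tmu_delta t lab F tau delta mu W x q.
Proof. by move=> V01 W01 VW; rewrite le_clip01// lerD2r le_Tmu. Qed.

Section optimal_operator.
Variable mu0 : X -> Q -> probability U R.
Hypothesis mu0_um : univ_measurable_policy mu0.

Let Tmu_delta_values V x q := [set Tmu_delta t lab F tau delta mu V x q |
  mu in [set mu | univ_measurable_policy mu]].

Let Tmu_delta_values_neq0 V x q : Tmu_delta_values V x q !=set0.
Proof. by exists (Tmu_delta t lab F tau delta mu0 V x q); exists mu0. Qed.

Let Tmu_delta_values_le1 V x q : ubound (Tmu_delta_values V x q) 1.
Proof. by move=> _ [mu _ <-]; case/andP: (Tmu_delta_01 mu V x q). Qed.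

Lemma Tmu_delta_le_Tstar_delta mu V x q : univ_measurable_policy mu ->
  Tmu_delta t lab F tau delta mu V x q <= Tstar_delta t lab F tau delta V x q.
Proof.
move=> mu_um; apply: sup_upper_bound; last by exists mu.
by split; [exact: Tmu_delta_values_neq0|exists 1; exact: Tmu_delta_values_le1].
Qed.

Lemma Tstar_delta_01 V : unit_valued (Tstar_delta t lab F tau delta V).
Proof.
move=> x q; apply/andP; split; last first.
  by apply: ge_sup; [exact: Tmu_delta_values_neq0|exact: Tmu_delta_values_le1].
apply: le_trans (Tmu_delta_le_Tstar_delta V x q mu0_um).
by case/andP: (Tmu_delta_01 mu0 V x q).
Qed.

Lemma le_Tstar_delta V W x q : unit_valued V -> unit_valued W ->
  (forall x q, V x q <= W x q) ->
  Tstar_delta t lab F tau delta V x q <= Tstar_delta t lab F tau delta W x q.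
Proof.
move=> V01 W01 VW; apply: ge_sup; first exact: Tmu_delta_values_neq0.
move=> _ [mu mu_um <-].
exact: le_trans (le_Tmu_delta mu x q V01 W01 VW)
  (Tmu_delta_le_Tstar_delta W x q mu_um).
Qed.

Lemma iter_Tmu_delta_le_iter_Tstar_delta l x q :
  iter l (Tmu_delta t lab F tau delta mu0) (fun _ _ => 0) x q <=
    iter l (Tstar_delta t lab F tau delta) (fun _ _ => 0) x q.
Proof.
elim: l x q => [|l IH] x q /=; first exact: lexx.
apply: le_trans (Tmu_delta_le_Tstar_delta _ _ _ mu0_um).
apply: le_Tmu_delta IH; apply: iter_unit_valued => V _.
- exact: Tmu_delta_01.
- exact: Tstar_delta_01.
Qed.

Section value_iteration.
Variable Vinf : X -> Q -> R.
Hypothesis Vinf_lim : forall x q,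
  (fun l => iter l (Tstar_delta t lab F tau delta) (fun _ _ => 0) x q) @ \oo -->
    Vinf x q.
Arguments Vinf_lim : clear implicits.

Let vi l := iter l (Tstar_delta t lab F tau delta) (fun _ _ => 0).

Let vi_01 l : unit_valued (vi l).
Proof. by apply: iter_unit_valued => V _; exact: Tstar_delta_01. Qed.

Lemma iter_Tstar_delta_nondecreasing x q : nondecreasing_seq (fun l => vi l x q).
Proof.
apply/nondecreasing_seqP => l; elim: l x q => [|l IH] x q.
  by case/andP: (Tstar_delta_01 (fun _ _ => 0) x q).
exact: le_Tstar_delta (vi_01 l) (vi_01 l.+1) IH.
Qed.

Lemma iter_Tstar_delta_le_lim l x q : vi l x q <= Vinf x q.
Proof.
rewrite -(cvg_lim (@Rhausdorff R) (Vinf_lim x q)).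
exact: nondecreasing_cvgn_le (iter_Tstar_delta_nondecreasing x q)
  (cvgP _ (Vinf_lim x q)) l.
Qed.

Lemma lim_iter_Tstar_delta_01 : unit_valued Vinf.
Proof.
move=> x q; rewrite (iter_Tstar_delta_le_lim 0) /=.
apply: cvgr_to_le (Vinf_lim x q) _; apply: nearW => l.
by case/andP: (vi_01 l x q).
Qed.

Lemma lim_iter_Tstar_delta_subfixed x q :
  Vinf x q <= Tstar_delta t lab F tau delta Vinf x q.
Proof.
apply: cvgr_to_le (Vinf_lim x q) _; apply: nearW => l.
apply: le_trans (iter_Tstar_delta_nondecreasing x q (leqnSn l)) _.
exact: le_Tstar_delta (vi_01 l) lim_iter_Tstar_delta_01
  (iter_Tstar_delta_le_lim l).
Qed.

End value_iteration.

End optimal_operator.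

Section subfixed_point.
Variables (mu : X -> Q -> probability U R) (V : X -> Q -> R).
Hypotheses (delta_gt0 : 0 < delta) (V01 : unit_valued V)
  (V_subfixed : forall x q, V x q <= Tmu_delta t lab F tau delta mu V x q).

Let W l := iter l (Tmu_delta t lab F tau delta mu) (fun _ _ => 0).

Let W01 l : unit_valued (W l).
Proof. by apply: iter_unit_valued => V' _; exact: Tmu_delta_01. Qed.

Lemma subfixed_gap_iter_Tmu_delta k l x q : 0 < k ->
  V x q + k * (V x q - W l x q) <= Num.max (1 + k - l%:R * delta) 1.
Proof.
move=> k0; elim: l x q => [|l IH] x q.
  have /andP[_ V1] := V01 x q.
  rewrite /W /= mul0r !subr0 le_max; apply/orP; left.
  by rewrite lerD// -[leRHS]mulr1 ler_wpM2l// ltW.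
set m := Num.max (1 + k - l%:R * delta) 1.
set TV := Tmu t lab F tau mu V x q; set TW := Tmu t lab F tau mu (W l) x q.
have gapT : TV + k * (TV - TW) <= m.
  apply: Tmu_gap_le => //; first by rewrite le_max ler01 orbT.
  move=> y; set q' := tau q (lab y).
  have /andP[V0 V1] := V01 y q'; have /andP[W0 W1] := W01 l y q'.
  rewrite /Tmu_integrand -/q'; case: (q' \in F) => /=.
    by rewrite !max_l// subrr mulr0 addr0 le_max lexx orbT.
  by rewrite !max_r//; exact: IH.
have /andP[_ V1] := V01 x q; have /andP[W0 _] := W01 l.+1 x q.
have [VW|WV] := leP (V x q) (W l.+1 x q).
  apply: (@le_trans _ _ (V x q)); last by rewrite le_max V1 orbT.
  by rewrite gerDl mulr_ge0_le0 ?subr_le0// ltW.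
have VTV : V x q <= TV - delta.
  apply: le_trans (V_subfixed x q) (clip01_gt0_le _).
  exact: le_lt_trans W0 (lt_le_trans WV (V_subfixed x q)).
have TWW : TW - delta <= W l.+1 x q.
  have /andP[_ TW1] := Tmu_01 mu (W01 l) x q.
  by apply: clip01_ge; rewrite lerBlDr (le_trans TW1)// lerDl ltW.
have kgap : k * (V x q - W l.+1 x q) <= k * (TV - TW).
  apply: ler_wpM2l; first exact: ltW.
  by have := lerB VTV TWW; rewrite opprB addrA subrK.
apply: (@le_trans _ _ (m - delta)).
  by apply: le_trans (lerD VTV kgap) _; rewrite addrAC lerD2r.
rewrite /m addr_maxl mulrSr mulrDl mul1r opprD addrA.
by rewrite le_max2// lerBlDr lerDl ltW.
Qed.

Lemma subfixed_sub_iter_Tmu_delta_le l x q : (0 < l)%N ->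
  V x q - W l x q <= (l%:R * delta)^-1.
Proof.
move=> l0; have ld0 : 0 < l%:R * delta by rewrite mulr_gt0// ltr0n.
have := subfixed_gap_iter_Tmu_delta l x q ld0.
rewrite addrK maxxx => gap1; have /andP[V0 _] := V01 x q.
rewrite -(ler_pM2l ld0) mulfV ?gt_eqF//.
by apply: le_trans gap1; rewrite lerDr.
Qed.

End subfixed_point.

End operators.

Unset Implicit Arguments.
Theorem theorem1
  (R : realType)
  (dX dU dY : measure_display)
  (* gMDP  (X, U, Y, x0, t, h) *)
  (X : measurableType dX) (U : measurableType dU) (Y : measurableType dY)
  (hX : polish_measurable X R) (hU : polish_measurable U R)
  (hY : metric_measurable Y R)
  (x0 : X)
  (t : R.-pker (X * U)%type ~> X)
  (h : X -> Y) (mh : measurable_fun setT h)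
  (* labelling L : Y -> 2^AP, measurable *)
  (AP : finType) (L : Y -> {set AP})
  (mL : forall s : {set AP}, measurable (L @^-1` [set s]))
  (* DFA (Q, q0, Sigma, F, tau) *)
  (Q : finType) (q0 : Q) (F : {set Q}) (tau : Q -> {set AP} -> Q)
  (delta : R) (delta_gt0 : 0 < delta)
  (Vinf : X -> Q -> R)
  (hVinf : forall x q,
     (fun l => iter l (Tstar_delta t (fun x => L (h x)) F tau delta)
                      (fun _ _ => 0) x q) @ \oo --> Vinf x q)
  (mustar : X -> Q -> probability U R)
  (mustar_um : univ_measurable_policy mustar)
  (mustar_opt : Tmu_delta t (fun x => L (h x)) F tau delta mustar Vinf
                = Tstar_delta t (fun x => L (h x)) F tau delta Vinf) :
  forall x q,
    (fun l => iter l (Tmu_delta t (fun x => L (h x)) F tau delta mustar)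
                     (fun _ _ => 0) x q) @ \oo --> Vinf x q.
Proof.
set lab := fun x => L (h x).
have Vinf01 := lim_iter_Tstar_delta_01 mustar_um hVinf.
have Vinf_subfixed x q : Vinf x q <= Tmu_delta t lab F tau delta mustar Vinf x q.
  by rewrite mustar_opt; exact: (lim_iter_Tstar_delta_subfixed mustar_um hVinf).
move=> x q; apply: (cvg_gap_le_inv delta_gt0) => l l0.
have gap := subfixed_sub_iter_Tmu_delta_le delta_gt0 Vinf01 Vinf_subfixed.
rewrite subr_ge0 gap// andbT.
apply: le_trans (iter_Tstar_delta_le_lim mustar_um hVinf l x q).
exact: iter_Tmu_delta_le_iter_Tstar_delta.
Qed.
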